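(* Every uniform Kan complex $A$ has a connection $c:A^{\mathrm{I}}\to A^{\mathrm{I}\times\mathrm{I}}$.
   Context: Let $\mathbb{B}$ be the category of finite sets $[n]=\{\bot,x_1,\dots,x_n,\top\}$ ($n\ge0$, $\bot\ne\top$) and functions preserving $\bot,\top$; cartesian cubical sets are presheaves on $\mathbb{B}^{op}$. $\mathrm{I}^n$ is the representable on $[n]$, $\mathrm{I}^n\cong\mathrm{I}\times\dots\times\mathrm{I}$, $\mathrm{I}=\mathrm{I}^1$, $\mathrm{I}^0=1$; maps $\mathrm{I}^n\to X$ correspond to $n$-cubes of $X$. The two maps $[1]\to[0]$ give endpoints $0,1:1\to\mathrm{I}$. For $1\le i\le n$, $d\in\{0,1\}$, the face $\alpha_i^d:\mathrm{I}^{n-1}\to\mathrm{I}^n$ inserts $d$ in coordinate $i$; for $e\in\{0,1\}$ the open box $\sqcup^n_e\rightarrowtail\mathrm{I}^n$ is the union of the images of all faces $\alpha_i^d$ with $(i,d)\ne(1,e)$, with inclusion $i^n_e$. A uniform Kan complex is a cubical set $A$ with, for each $n\ge1$, $e\in\{0,1\}$, $k\ge1$ and each $b:\mathrm{I}^k\times\sqcup^n_e\to A$, a chosen extension $\phi(b):\mathrm{I}^k\times\mathrm{I}^n\to A$ of $b$ along $1\times i^n_e$, such that $\phi(b(\alpha\times1))=\phi(b)(\alpha\times1)$ for all $\alpha:\mathrm{I}^j\to\mathrm{I}^k$ ($j\ge 1$). A connection on a cubical set $X$ is a map of cubical sets $c:X^{\mathrm{I}}\to X^{\mathrm{I}\times\mathrm{I}}$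 such that for every $n$ and every $n$-cube $a$ of $X^{\mathrm{I}}$, viewed as $a:\mathrm{I}^n\times\mathrm{I}\to X$, with $a_0=a\circ(1\times0):\mathrm{I}^n\to X$, the $n$-cube $c(a)$, viewed as $c(a):\mathrm{I}^n\times\mathrm{I}\times\mathrm{I}\to X$ (coordinates $(u,s,t)$), satisfies: its restriction to $s=1$ is $a$ (as a map $\mathrm{I}^n\times\mathrm{I}\to X$ in $(u,t)$), and its restrictions to $s=0$ and to $t=0$ are both the constant path $a_0\circ\mathrm{pr}_{\mathrm{I}^n}$ at $a_0$. (The restriction to $t=1$ is unconstrained.) *)

From Stdlib Require Import FunctionalExtensionality ProofIrrelevance.
From HB Require Import structures.
From mathcomp Require Import all_boot.
Set Implicit Arguments. Unset Strict Implicit. Unset Printing Implicit Defensive.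

(* The category B.  The object [n] = {bot, x_1, ..., x_n, top} is      *)
(* encoded as 'I_n.+2 with bot = 0, top = 1 and x_(i+1) = i+2          *)
(* (for i : 'I_n).                                                     *)
Definition pbot n : 'I_n.+2 := ord0.
Definition ptop n : 'I_n.+2 := @Ordinal n.+2 1 isT.
Definition pvar n (i : 'I_n) : 'I_n.+2 := rshift 2 i.
Definition pend n (d : bool) : 'I_n.+2 := if d then ptop n else pbot n.

Definition Bpred m n (f : {ffun 'I_m.+2 -> 'I_n.+2}) : bool :=
  (f (pbot m) == pbot n) && (f (ptop m) == ptop n).

Definition Bhom m n := {f : {ffun 'I_m.+2 -> 'I_n.+2} | Bpred f}.

Lemma Bhom_ext m n (f g : Bhom m n) : (forall p, val f p = val g p) -> f = g.
Proof. by move=> H; apply: val_inj; apply/ffunP. Qed.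

Lemma Bid_proof n : Bpred [ffun p : 'I_n.+2 => p].
Proof. by rewrite /Bpred !ffunE !eqxx. Qed.
Definition Bid n : Bhom n n := exist (@Bpred n n) _ (Bid_proof n).

Lemma Bcomp_proof l m n (g : Bhom m n) (f : Bhom l m) :
  Bpred [ffun p => val g (val f p)].
Proof.
rewrite /Bpred !ffunE; case/andP: (valP f) => /eqP -> /eqP ->; exact: (valP g).
Qed.
Definition Bcomp l m n (g : Bhom m n) (f : Bhom l m) : Bhom l n :=
  exist (@Bpred l n) _ (Bcomp_proof g f).

Lemma Bcomp_id_l m n (f : Bhom m n) : Bcomp (Bid n) f = f.
Proof. by apply: Bhom_ext => p; rewrite /= !ffunE. Qed.
Lemma Bcomp_id_r m n (f : Bhom m n) : Bcomp f (Bid m) = f.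
Proof. by apply: Bhom_ext => p; rewrite /= !ffunE. Qed.
Lemma Bcomp_assoc k l m n (h : Bhom m n) (g : Bhom l m) (f : Bhom k l) :
  Bcomp h (Bcomp g f) = Bcomp (Bcomp h g) f.
Proof. by apply: Bhom_ext => p; rewrite /= !ffunE. Qed.

(* Cartesian cubical sets: presheaves on B^op, i.e. functors B -> Set. *)
Record cset := CSet {
  cob :> nat -> Type;
  cact : forall m n, Bhom m n -> cob m -> cob n;
  cact_id : forall n x, cact (Bid n) x = x;
  cact_comp : forall l m n (f : Bhom l m) (g : Bhom m n) x,
      cact (Bcomp g f) x = cact g (cact f x) }.
Arguments cact {c m n}.

Unset Implicit Arguments.
Record cmap (X Y : cset) := CMap {
  cfun :> forall n, X n -> Y n;
  cnat : forall m n (f : Bhom m n) (x : X m),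
    cfun n (cact (c := X) f x) = cact (c := Y) f (cfun m x) }.
Set Implicit Arguments.
Arguments CMap {X Y}.
Arguments cnat {X Y}.

Definition ceq (X Y : cset) (f g : cmap X Y) : Prop :=
  forall n x, f n x = g n x.

Lemma cmap_ext (X Y : cset) (f g : cmap X Y) : ceq f g -> f = g.
Proof.
case: f g => [f fn] [g gn] /= H.
have E : f = g by apply: functional_extensionality_dep => n;
  apply: functional_extensionality => x; exact: H.
subst g; by rewrite (proof_irrelevance _ fn gn).
Qed.

Definition cid (X : cset) : cmap X X := @CMap X X (fun n x => x) (fun _ _ _ _ => erefl).

Lemma ccomp_nat (X Y Z : cset) (g : cmap Y Z) (f : cmap X Y) m n (h : Bhom m n) x :
  g n (f n (cact h x)) = cact h (g m (f m x)).
Proof. by rewrite !cnat. Qed.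
Definition ccomp (X Y Z : cset) (g : cmap Y Z) (f : cmap X Y) : cmap X Z :=
  @CMap X Z (fun n x => g n (f n x)) (ccomp_nat g f).

(* the representable I^n = B([n], -) *)
Definition yI (n : nat) : cset :=
  @CSet (fun m => Bhom n m) (fun m m' g f => Bcomp g f)
        (fun m f => Bcomp_id_l f)
        (fun l m m' f g x => esym (Bcomp_assoc g f x)).

Lemma yImap_nat n m (f : Bhom n m) l l' (h : Bhom l l') (g : Bhom m l) :
  Bcomp (Bcomp h g) f = Bcomp h (Bcomp g f).
Proof. by rewrite Bcomp_assoc. Qed.
Definition yImap n m (f : Bhom n m) : cmap (yI m) (yI n) :=
  @CMap (yI m) (yI n) (fun l g => Bcomp g f) (@yImap_nat n m f).

Definition cprod_act (X Y : cset) m n (f : Bhom m n) (p : X m * Y m) : X n * Y n :=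
  (cact f p.1, cact f p.2).
Lemma cprod_id (X Y : cset) n (p : X n * Y n) : cprod_act (Bid n) p = p.
Proof. by case: p => x y; rewrite /cprod_act /= !cact_id. Qed.
Lemma cprod_comp (X Y : cset) l m n (f : Bhom l m) (g : Bhom m n) (p : X l * Y l) :
  cprod_act (Bcomp g f) p = cprod_act g (cprod_act f p).
Proof. by case: p => x y; rewrite /cprod_act /= !cact_comp. Qed.
Definition cprod (X Y : cset) : cset :=
  @CSet (fun n => (X n * Y n)%type) (@cprod_act X Y)
        (@cprod_id X Y) (@cprod_comp X Y).

Lemma cfst_nat (X Y : cset) m n (f : Bhom m n) (p : cprod X Y m) :
  (cact f p).1 = cact f p.1.
Proof. by []. Qed.
Definition cfst (X Y : cset) : cmap (cprod X Y) X := @CMap (cprod X Y) X (fun n p => p.1) (@cfst_nat X Y).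

Lemma cpair_nat (Z X Y : cset) (f : cmap Z X) (g : cmap Z Y) m n (h : Bhom m n) z :
  (f n (cact h z), g n (cact h z)) = cact (c := cprod X Y) h (f m z, g m z).
Proof. by rewrite !cnat. Qed.
Definition cpair (Z X Y : cset) (f : cmap Z X) (g : cmap Z Y) : cmap Z (cprod X Y) :=
  @CMap Z (cprod X Y) (fun n z => (f n z, g n z)) (cpair_nat f g).

Lemma prod_map_nat (X X' Y Y' : cset) (f : cmap X X') (g : cmap Y Y') m n
  (h : Bhom m n) (p : cprod X Y m) :
  (f n (cact h p).1, g n (cact h p).2) = cact (c := cprod X' Y') h (f m p.1, g m p.2).
Proof. by case: p => x y /=; rewrite !cnat. Qed.
Definition prod_map (X X' Y Y' : cset) (f : cmap X X') (g : cmap Y Y') :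
  cmap (cprod X Y) (cprod X' Y') := @CMap (cprod X Y) (cprod X' Y') (fun n p => (f n p.1, g n p.2))
    (prod_map_nat f g).

Section Sub.
Variables (X : cset) (P : forall n, X n -> bool)
  (HP : forall m n (f : Bhom m n) x, @P m x -> @P n (cact f x)).
Definition csub_act m n (f : Bhom m n) (x : {x : X m | @P m x}) : {x : X n | @P n x} :=
  exist _ (cact f (val x)) (HP f (valP x)).
Lemma csub_id n x : csub_act (Bid n) x = x.
Proof. by apply: val_inj; rewrite /= cact_id. Qed.
Lemma csub_comp l m n (f : Bhom l m) (g : Bhom m n) x :
  csub_act (Bcomp g f) x = csub_act g (csub_act f x).
Proof. by apply: val_inj; rewrite /= cact_comp. Qed.
Definition csub : cset := @CSet (fun n => {x : X n | @P n x}) csub_act csub_id csub_comp.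
Definition csub_incl : cmap csub X :=
  @CMap csub X (fun n x => val x) (fun m n f x => erefl).
End Sub.

(* Faces and open boxes.  For a box in I^(n+1) (so the paper's n is    *)
(* our n+1 >= 1), coordinate i : 'I_n.+1 is the paper's coordinate     *)
(* i+1.  The face alpha_(i+1)^d : I^n -> I^(n+1) is the Yoneda image   *)
(* of the B-map [n+1] -> [n] sending x_(i+1) to d and the other        *)
(* variables, in order, to x_1..x_n.                                   *)
Definition face_fun n (i : 'I_n.+1) (d : bool) (p : 'I_n.+3) : 'I_n.+2 :=
  if p < 2 then inord p
  else if val p == i.+2 then pend n d
  else if p < i.+2 then inord p
  else inord p.-1.

Lemma face_proof n (i : 'I_n.+1) (d : bool) : Bpred [ffun p => face_fun i d p].
Proof.
by rewrite /Bpred !ffunE /face_fun /=; apply/andP; split; apply/eqP/val_inj;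
  rewrite /= inordK.
Qed.
Definition face n (i : 'I_n.+1) (d : bool) : Bhom n.+1 n := exist (@Bpred n.+1 n) _ (face_proof i d).

Definition alpha n (i : 'I_n.+1) (d : bool) : cmap (yI n) (yI n.+1) := yImap (face i d).

Definition boxP n (e : bool) m (f : Bhom n.+1 m) : bool :=
  [exists i : 'I_n.+1, exists d : bool,
     ((i != ord0) || (d != e)) && [exists g : Bhom n m, f == alpha i d m g]].

Lemma boxP_closed n e m m' (h : Bhom m m') (f : Bhom n.+1 m) :
  boxP e f -> boxP e (cact (c := yI n.+1) h f).
Proof.
case/existsP=> i /existsP [d /andP [H /existsP [g /eqP Hg]]].
apply/existsP; exists i; apply/existsP; exists d; rewrite H /=.
apply/existsP; exists (Bcomp h g); apply/eqP.
by rewrite Hg /= Bcomp_assoc.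
Qed.

Definition box n (e : bool) : cset := @csub (yI n.+1) (fun m f => @boxP n e m f) (@boxP_closed n e).
Definition box_incl n (e : bool) : cmap (box n e) (yI n.+1) := @csub_incl (yI n.+1) (fun m f => @boxP n e m f) (@boxP_closed n e).

Record uKan (A : cset) := UKan {
  fill : forall (n : nat) (e : bool) (k : nat),
      cmap (cprod (yI k) (box n e)) A -> cmap (cprod (yI k) (yI n.+1)) A;
  fill_ext : forall n e k, 1 <= k -> forall b : cmap (cprod (yI k) (box n e)) A,
      ceq (ccomp (fill b) (prod_map (cid (yI k)) (box_incl n e))) b;
  fill_unif : forall n e j k, 1 <= j -> 1 <= k ->
      forall (al : cmap (yI j) (yI k)) (b : cmap (cprod (yI k) (box n e)) A),
      ceq (fill (ccomp b (prod_map al (cid (box n e)))))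
          (ccomp (fill b) (prod_map al (cid (yI n.+1)))) }.

Definition expo_act (X Y : cset) m n (f : Bhom m n) (a : cmap (cprod (yI m) Y) X) :
  cmap (cprod (yI n) Y) X := ccomp a (prod_map (yImap f) (cid Y)).
Lemma expo_id (X Y : cset) n (a : cmap (cprod (yI n) Y) X) : expo_act (Bid n) a = a.
Proof. by apply: cmap_ext => l [g y]; rewrite /= Bcomp_id_r. Qed.
Lemma expo_comp (X Y : cset) l m n (f : Bhom l m) (g : Bhom m n) a :
  expo_act (X := X) (Y := Y) (Bcomp g f) a = expo_act g (expo_act f a).
Proof. by apply: cmap_ext => k [h y]; rewrite /= Bcomp_assoc. Qed.
Definition expo (X Y : cset) : cset :=
  @CSet (fun n => cmap (cprod (yI n) Y) X) (@expo_act X Y) (@expo_id X Y) (@expo_comp X Y).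

(* Endpoints 0, 1 : 1 -> I; we use the composite  Z -> 1 -> I.          *)
Definition cst_fun m (d : bool) (p : 'I_3) : 'I_m.+2 :=
  if val p == 0 then pbot m else if val p == 1 then ptop m else pend m d.
Lemma cst_proof m d : Bpred [ffun p => cst_fun m d p].
Proof. by rewrite /Bpred !ffunE /cst_fun /= !eqxx. Qed.
Definition cst_pt m (d : bool) : Bhom 1 m := exist (@Bpred 1 m) _ (cst_proof m d).

Lemma cst_nat (Z : cset) (d : bool) m n (h : Bhom m n) (z : Z m) :
  cst_pt n d = cact (c := yI 1) h (cst_pt m d).
Proof.
apply: Bhom_ext => p; rewrite /= !ffunE /cst_fun.
case/andP: (valP h) => /eqP H0 /eqP H1.
by case: ifP => _; [|case: ifP => _; [|case: d]].
Qed.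
Definition cend (Z : cset) (d : bool) : cmap Z (yI 1) := @CMap Z (yI 1) (fun m _ => cst_pt m d) (@cst_nat Z d).

Definition Ic := yI 1.

Definition at0 n : cmap (yI n) (cprod (yI n) Ic) := cpair (cid (yI n)) (cend (yI n) false).
(* (u, t) |-> (u, (d, t)) : I^n x I -> I^n x (I x I)   (restriction s = d) *)
Definition ins_s n (d : bool) : cmap (cprod (yI n) Ic) (cprod (yI n) (cprod Ic Ic)) :=
  prod_map (cid (yI n)) (cpair (cend Ic d) (cid Ic)).
(* (u, s) |-> (u, (s, d)) : I^n x I -> I^n x (I x I)   (restriction t = d) *)
Definition ins_t n (d : bool) : cmap (cprod (yI n) Ic) (cprod (yI n) (cprod Ic Ic)) :=
  prod_map (cid (yI n)) (cpair (cid Ic) (cend Ic d)).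

Definition is_connection (X : cset) (c : cmap (expo X Ic) (expo X (cprod Ic Ic))) : Prop :=
  forall n (a : cmap (cprod (yI n) Ic) X),
    let a0 : cmap (yI n) X := ccomp a (at0 n) in
    [/\ ceq (ccomp (c n a) (ins_s n true)) a,
        ceq (ccomp (c n a) (ins_s n false)) (ccomp a0 (cfst (yI n) Ic)) &
        ceq (ccomp (c n a) (ins_t n false)) (ccomp a0 (cfst (yI n) Ic))].

From mathcomp Require Import all_boot.
Set Implicit Arguments. Unset Strict Implicit. Unset Printing Implicit Defensive.

(* The open box sqcup^2_1, with coordinates (t, s) and missing face t = 1,
   retracts onto I: send (t, 1) to t and the faces t = 0 and s = 0 to the
   endpoint 0.  Precomposing a path a : I^n x I -> A with this retraction
   gives an open box in A, and c(a)(u, s, t) is its chosen filler at (t, s).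
   Since the filler extends the box, c(a) is a on s = 1 and the constant path
   at a_0 on s = 0 and on t = 0; uniformity of the fillers makes c natural. *)

Lemma Bhom_bot k m (g : Bhom k m) : val g (pbot k) = pbot m.
Proof. by case/andP: (valP g) => /eqP. Qed.

Lemma Bhom_top k m (g : Bhom k m) : val g (ptop k) = ptop m.
Proof. by case/andP: (valP g) => _ /eqP. Qed.

Lemma Bhom_pend k m (g : Bhom k m) d : val g (pend k d) = pend m d.
Proof. by case: d; [exact: Bhom_top | exact: Bhom_bot]. Qed.

Lemma inord_bot n : inord 0 = pbot n.
Proof. by apply: val_inj; rewrite /= inordK. Qed.

Lemma inord_top n : inord 1 = ptop n.
Proof. by apply: val_inj; rewrite /= inordK. Qed.

Lemma Bcomp_cst_pt m n (h : Bhom m n) d : Bcomp h (cst_pt m d) = cst_pt n d.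
Proof.
apply: Bhom_ext => p; rewrite /= !ffunE /cst_fun.
by case: ifP => _; [|case: ifP => _]; rewrite ?Bhom_bot ?Bhom_top ?Bhom_pend.
Qed.

Lemma cst_pt_pvar l d : val (cst_pt l d) (pvar ord0) = pend l d.
Proof. by rewrite ffunE. Qed.

Lemma Bvar_proof n (i : 'I_n) :
  Bpred [ffun p : 'I_3 => if val p == 2 then pvar i else inord p].
Proof. by rewrite /Bpred !ffunE /= inord_bot inord_top !eqxx. Qed.
Definition Bvar n (i : 'I_n) : Bhom 1 n := exist (@Bpred 1 n) _ (Bvar_proof i).

Lemma Bvar_pend n m (i : 'I_n) (f : Bhom n m) d :
  val f (pvar i) = pend m d -> Bcomp f (Bvar i) = cst_pt m d.
Proof.
move=> fi; apply: Bhom_ext => p; rewrite /= !ffunE /cst_fun.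
case: p => [[|[|[|//]]] lt_p3] /=; rewrite ?inord_bot ?inord_top //.
- exact: Bhom_bot.
- exact: Bhom_top.
Qed.

Lemma face_fun_pvar n (i : 'I_n.+1) d : face_fun i d (pvar i) = pend n d.
Proof. by rewrite /face_fun /= eqxx. Qed.

Lemma face_factor_proof n m (i : 'I_n.+1) (f : Bhom n.+1 m) :
  Bpred [ffun q : 'I_n.+2 => val f (inord (if q < i.+2 then q : nat else q.+1))].
Proof.
rewrite /Bpred !ffunE /= inord_bot inord_top.
by rewrite Bhom_bot Bhom_top !eqxx.
Qed.
Definition face_factor n m (i : 'I_n.+1) (f : Bhom n.+1 m) : Bhom n m :=
  exist (@Bpred n m) _ (face_factor_proof i f).

Lemma face_factorE n m (i : 'I_n.+1) (f : Bhom n.+1 m) q :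
  val (face_factor i f) q = val f (inord (if q < i.+2 then q : nat else q.+1)).
Proof. by rewrite ffunE. Qed.

Lemma alpha_face_factor n m (i : 'I_n.+1) d (f : Bhom n.+1 m) :
  val f (pvar i) = pend m d -> f = alpha i d m (face_factor i f).
Proof.
move=> fi; apply: Bhom_ext => p.
transitivity (val (face_factor i f) (face_fun i d p)); last by rewrite /= !ffunE.
rewrite /face_fun.
case: ifP => [lt_p2 | ge_p2].
  have lt_pi : p < i.+2 by apply: leq_trans lt_p2 _.
  by rewrite face_factorE inordK ?lt_pi ?inord_val // (leq_trans lt_p2).
case: eqP => [p_i | /eqP ne_pi].
  by rewrite Bhom_pend -fi; congr (val f _); apply: val_inj.
case: ifP => [lt_pi | ge_pi]; rewrite face_factorE.
  have lt_pn : p < n.+2 by rewrite (leq_trans lt_pi) // ltnS.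
  by rewrite inordK // lt_pi inord_val.
have lt_ip : i.+2 < p by rewrite ltn_neqAle eq_sym ne_pi leqNgt ge_pi.
have p_pos : 0 < p by apply: ltn_trans lt_ip.
rewrite inordK; last by rewrite -ltnS prednK.
by rewrite prednK // leqNgt lt_ip inord_val.
Qed.

Lemma boxP_faceP n e m (f : Bhom n.+1 m) :
  boxP e f <-> exists i d, ((i != ord0) || (d != e)) /\ val f (pvar i) = pend m d.
Proof.
split.
  case/existsP=> i /existsP [d /andP [side /existsP [g /eqP ->]]].
  by exists i, d; split=> //; rewrite !ffunE face_fun_pvar Bhom_pend.
case=> i [d [side fi]]; apply/existsP; exists i; apply/existsP; exists d.
by rewrite side; apply/existsP; exists (face_factor i f); rewrite -alpha_face_factor.
Qed.

Lemma fill_on_box (A : cset) (K : uKan A) n e k (lt0k : 0 < k)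
    (b : cmap (cprod (yI k) (box n e)) A) l (u : Bhom k l) (f : Bhom n.+1 l)
    (fbox : boxP e f) :
  fill K b l (u, f) = b l (u, exist _ f fbox).
Proof. exact: (fill_ext K lt0k b (u, exist _ f fbox)). Qed.

(* The first coordinate [t] of [Bpair t s] is the filling direction of the
   box [box 1 true]. *)
Lemma Bpair_proof l (t s : Bhom 1 l) :
  Bpred [ffun p : 'I_4 => if val p == 3 then val s (pvar ord0) else val t (inord p)].
Proof. by rewrite /Bpred !ffunE /= inord_bot inord_top Bhom_bot Bhom_top !eqxx. Qed.
Definition Bpair l (t s : Bhom 1 l) : Bhom 2 l := exist (@Bpred 2 l) _ (Bpair_proof t s).

Lemma Bpair_s l (t s : Bhom 1 l) : val (Bpair t s) (pvar ord_max) = val s (pvar ord0).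
Proof. by rewrite ffunE. Qed.

Lemma Bpair_t l (t s : Bhom 1 l) : val (Bpair t s) (pvar ord0) = val t (pvar ord0).
Proof. by rewrite ffunE /=; congr (val t _); apply: val_inj; rewrite /= inordK. Qed.

Lemma Bpair_var0 l (t s : Bhom 1 l) : Bcomp (Bpair t s) (Bvar ord0) = t.
Proof.
apply: Bhom_ext => p; rewrite /= !ffunE.
case: p => [[|[|[|//]]] lt_p3] /=; rewrite ?inordK //;
  by congr (val t _); apply: val_inj; rewrite /= inordK.
Qed.

Lemma Bpair_nat l l' (h : Bhom l l') (t s : Bhom 1 l) :
  Bpair (Bcomp h t) (Bcomp h s) = Bcomp h (Bpair t s).
Proof. by apply: Bhom_ext => p; rewrite /= !ffunE; case: ifP. Qed.

Lemma square_nat m n (h : Bhom m n) (st : cprod Ic Ic m) :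
  Bpair (cact h st).2 (cact h st).1 = cact (c := yI 2) h (Bpair st.2 st.1).
Proof. exact: Bpair_nat. Qed.
Definition square : cmap (cprod Ic Ic) (yI 2) :=
  @CMap (cprod Ic Ic) (yI 2) (fun l st => Bpair st.2 st.1) square_nat.

Lemma boxP_square_cases m (f : Bhom 2 m) : boxP true f ->
  [\/ val f (pvar ord0) = pbot m, val f (pvar ord_max) = pbot m
    | val f (pvar ord_max) = ptop m].
Proof.
case/boxP_faceP=> i [d [side fi]].
case: (eqVneq i ord0) side fi => [-> | i0] side fi.
  by case: d side fi => // _; apply: Or31.
have i_max : i = ord_max by apply: val_inj; case: i i0 {side fi} => [[|[|]]].
by rewrite i_max in fi; case: d {side} fi; [apply: Or33 | apply: Or32].
Qed.

Definition box_retract_fun m (f : box 1 true m) : Ic m :=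
  if val (val f) (pvar ord_max) == ptop m then Bcomp (val f) (Bvar ord0)
  else cst_pt m false.

Lemma box_retract_nat m m' (h : Bhom m m') (f : box 1 true m) :
  box_retract_fun (cact h f) = cact (c := Ic) h (box_retract_fun f).
Proof.
case: f => g gbox; rewrite /box_retract_fun /= ffunE.
have [g_s | g_s] := eqVneq (val g (pvar ord_max)) (ptop m).
  by rewrite g_s Bhom_top eqxx Bcomp_assoc.
rewrite Bcomp_cst_pt; case: ifP => // hg_s.
(* a box point whose s-coordinate h sends to 1 lies on the face t = 0 *)
have g_t : val g (pvar ord0) = pbot m.
  case: (boxP_square_cases gbox) => // g_s'; move: hg_s.
    by rewrite g_s' Bhom_bot.
  by rewrite g_s' eqxx in g_s.
by apply: (Bvar_pend (d := false)); rewrite ffunE g_t Bhom_bot.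
Qed.

Definition box_retract : cmap (box 1 true) Ic :=
  @CMap (box 1 true) Ic box_retract_fun box_retract_nat.

Lemma boxP_Bpair_cst_s l (t : Ic l) d : boxP true (Bpair t (cst_pt l d)).
Proof. by apply/boxP_faceP; exists ord_max, d; rewrite Bpair_s cst_pt_pvar. Qed.

Lemma boxP_Bpair_cst_t l (s : Ic l) : boxP true (Bpair (cst_pt l false) s).
Proof. by apply/boxP_faceP; exists ord0, false; rewrite Bpair_t cst_pt_pvar. Qed.

(* Uniformity of [fill] is only required for parameter cubes of positive
   dimension, so n-cubes are filled with parameters in I^(n+1) whose last
   coordinate is a dummy: [yImap (Bincl n)] forgets it and
   [yImap (Bcollapse n)] sets it to 0. *)
Lemma Bincl_proof n : Bpred [ffun p : 'I_n.+2 => widen_ord (leqnSn n.+2) p].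
Proof. by rewrite /Bpred !ffunE; apply/andP; split; apply/eqP/val_inj. Qed.
Definition Bincl n : Bhom n n.+1 := exist (@Bpred n n.+1) _ (Bincl_proof n).

Lemma Bcollapse_proof n :
  Bpred [ffun q : 'I_n.+3 => if val q == n.+2 then pbot n else inord q].
Proof. by rewrite /Bpred !ffunE /= inord_bot inord_top !eqxx. Qed.
Definition Bcollapse n : Bhom n.+1 n := exist (@Bpred n.+1 n) _ (Bcollapse_proof n).

Lemma Blift_proof m n (f : Bhom m n) :
  Bpred [ffun q : 'I_m.+3 => if val q == m.+2 then ord_max
                            else widen_ord (leqnSn _) (val f (inord q))].
Proof.
rewrite /Bpred !ffunE /= inord_bot inord_top Bhom_bot Bhom_top.
by apply/andP; split; apply/eqP/val_inj.
Qed.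
Definition Blift m n (f : Bhom m n) : Bhom m.+1 n.+1 :=
  exist (@Bpred m.+1 n.+1) _ (Blift_proof f).

Lemma Bcollapse_incl n : Bcomp (Bcollapse n) (Bincl n) = Bid n.
Proof.
apply: Bhom_ext => p; rewrite /= !ffunE /= ltn_eqF //.
by apply: val_inj; rewrite /= inordK.
Qed.

Lemma Bincl_nat m n (f : Bhom m n) : Bcomp (Bincl n) f = Bcomp (Blift f) (Bincl m).
Proof.
apply: Bhom_ext => p; rewrite /= !ffunE /= ltn_eqF //.
by apply: val_inj; rewrite /= inord_val.
Qed.

Lemma Bcollapse_nat m n (f : Bhom m n) :
  Bcomp (Bcollapse n) (Blift f) = Bcomp f (Bcollapse m).
Proof.
apply: Bhom_ext => p; rewrite /= !ffunE.
case pm: (val p == m.+2) => /=; first by rewrite eqxx Bhom_bot.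
by rewrite ltn_eqF //; apply: val_inj; rewrite /= inordK.
Qed.

Section Connection.
Variables (A : cset) (K : uKan A).

Definition box_map n (a : expo A Ic n) : cmap (cprod (yI n.+1) (box 1 true)) A :=
  ccomp a (prod_map (yImap (Bincl n)) box_retract).

Lemma box_map_nat m n (f : Bhom m n) (a : expo A Ic m) :
  box_map (cact f a) = ccomp (box_map a) (prod_map (yImap (Blift f)) (cid _)).
Proof. by apply: cmap_ext => l x; rewrite /= -!Bcomp_assoc Bincl_nat. Qed.

Definition connection_fun n (a : expo A Ic n) : expo A (cprod Ic Ic) n :=
  ccomp (fill K (box_map a)) (prod_map (yImap (Bcollapse n)) square).

Lemma connection_nat m n (f : Bhom m n) (a : expo A Ic m) :
  connection_fun (cact f a) = cact f (connection_fun a).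
Proof.
apply: cmap_ext => l [u st]; rewrite /connection_fun box_map_nat.
rewrite /= (fill_unif K (ltn0Sn n) (ltn0Sn m) (yImap (Blift f)) (box_map a) (_, _)) /=.
by rewrite -!Bcomp_assoc Bcollapse_nat.
Qed.

Definition connection : cmap (expo A Ic) (expo A (cprod Ic Ic)) :=
  @CMap (expo A Ic) (expo A (cprod Ic Ic)) connection_fun connection_nat.

Lemma fill_box_map n (a : expo A Ic n) l (u : Bhom n l) (f : Bhom 2 l)
    (fbox : boxP true f) :
  fill K (box_map a) l (Bcomp u (Bcollapse n), f)
  = a l (u, box_retract_fun (exist (fun f => boxP true f) f fbox : box 1 true l)).
Proof.
rewrite (fill_on_box _ (ltn0Sn n) _ _ fbox) /=.
by rewrite -Bcomp_assoc Bcollapse_incl Bcomp_id_r.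
Qed.

End Connection.

Theorem lemma3p8 (A : cset) (K : uKan A) :
  exists c : cmap (expo A Ic) (expo A (cprod Ic Ic)), is_connection c.
Proof.
exists (connection K) => n a; split => l [u t] /=.
- rewrite (fill_box_map _ _ _ (boxP_Bpair_cst_s t true)) /box_retract_fun.
  by rewrite Bpair_s cst_pt_pvar eqxx Bpair_var0.
- rewrite (fill_box_map _ _ _ (boxP_Bpair_cst_s t false)) /box_retract_fun.
  by rewrite Bpair_s cst_pt_pvar.
- rewrite (fill_box_map _ _ _ (boxP_Bpair_cst_t t)) /box_retract_fun.
  by rewrite Bpair_var0; case: ifP.
Qed.
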